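(* Every indecomposable coherent sheaf on $\operatorname{MSpec}(\langle t,t^{-1}\rangle)$ is of the form $\widetilde{N}$ where $N$ is isomorphic, as a $\langle t,t^{-1}\rangle$-module, either to $\langle t,t^{-1}\rangle$ itself or to $C_k=\{*,1,t,\dots,t^{k-1}\}$ for some integer $k\ge1$, on which $t$ acts by cyclically permuting $1\mapsto t\mapsto\dots\mapsto t^{k-1}\mapsto 1$ (the quotient of $\langle t,t^{-1}\rangle$ by the identification $t^k=1$, written $\langle t,t^{-1}\rangle/\langle t^k,t^{-k}\rangle$).
   Context: $\langle t,t^{-1}\rangle=\{0\}\cup\{t^n:n\in\mathbb Z\}$ is the infinite cyclic group with an absorbing zero adjoined. A module over a monoid $A$ (commutative, with $1$ and absorbing $0$) is a pointed set $(M,* )$ with an action satisfying $1m=m$, $a(bm)=(ab)m$, $0m=*$; it is finitely generated if finitely many elements generate it under the action. $\operatorname{MSpec}(A)$ is the space of prime ideals with the Zariski topology, and $\widetilde N$ is the sheaf with sections $N_f$ (localization at powers of $f$) on basic opens $D(f)$; coherent sheaves on $\operatorname{MSpec}(A)$ are exactly the $\widetilde N$ with $N$ finitely generated. A coherent sheaf is indecomposable if it is non-zero and is not a direct sum (sectionwise wedge sum) of two non-zero coherent sheaves. We denote $\mathcal{L}=\widetilde{\langle t,t^{-1}\rangle}$ and $\mathcal{C}_k=\widetilde{C_k}$. *)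

From Stdlib Require Import Arith ZArith Lia.

(* None = 0 (absorbing), Some n = t^n. *)
Definition A := option Z.
Definition azero : A := None.
Definition aone : A := Some 0%Z.
Definition amul (a b : A) : A :=
  match a, b with Some x, Some y => Some (x + y)%Z | _, _ => None end.
Fixpoint apow (f : A) (n : nat) : A :=
  match n with O => aone | S n => amul f (apow f n) end.

Lemma amulA a b c : amul a (amul b c) = amul (amul a b) c.
Proof. destruct a, b, c; simpl; f_equal; lia. Qed.

Record tmodule := TModule {
  car :> Type;
  pt : car;
  act : A -> car -> car;
  act1 : forall m, act aone m = m;
  actM : forall a b m, act a (act b m) = act (amul a b) m;
  act0 : forall m, act azero m = pt }.

Arguments pt {t}.
Arguments act {t}.

Definition fin_gen (N : tmodule) : Prop :=
  exists s : list N, forall m : N,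
    m = pt \/ exists (a : A) (g : N), List.In g s /\ m = act a g.

Definition mod_hom (N N' : tmodule) (phi : N -> N') : Prop :=
  phi pt = pt /\ forall a m, phi (act a m) = act a (phi m).

Definition mod_iso (N N' : tmodule) : Prop :=
  exists (phi : N -> N') (psi : N' -> N),
    mod_hom N N' phi /\ mod_hom N' N psi /\
    (forall m, psi (phi m) = m) /\ (forall m', phi (psi m') = m').

Definition Amod : tmodule.
Proof.
  refine (@TModule A azero amul _ _ _).
  - intros [m|]; simpl; auto.
  - intros; apply amulA.
  - reflexivity.
Defined.

(* C_k = {*, 1, t, ..., t^(k-1)}, t acting by cyclic permutation:
   t^n . t^i = t^((n+i) mod k);  0 . x = *. *)
Definition ck_elt (k : nat) := {i : nat | i < k}.

Lemma ck_bound (k i : nat) (n : Z) :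
  i < k -> Z.to_nat ((n + Z.of_nat i) mod Z.of_nat k) < k.
Proof.
  intro H. assert (Hk : (0 < Z.of_nat k)%Z) by lia.
  pose proof (Z.mod_pos_bound (n + Z.of_nat i) _ Hk). lia.
Qed.

Definition ck_act (k : nat) (a : A) (x : option (ck_elt k)) : option (ck_elt k) :=
  match a, x with
  | Some n, Some (exist _ i Hi) =>
      Some (exist _ (Z.to_nat ((n + Z.of_nat i) mod Z.of_nat k)) (ck_bound k i n Hi))
  | _, _ => None
  end.

Lemma ck_eq k (i j : nat) (Hi : i < k) (Hj : j < k) :
  i = j -> exist (fun x => x < k) i Hi = exist _ j Hj.
Proof. intros ->. f_equal. apply Peano_dec.le_unique. Qed.

Definition Cmod (k : nat) : tmodule.
Proof.
  refine (@TModule (option (ck_elt k)) None (ck_act k) _ _ _).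
  - intros [[i Hi]|]; simpl; auto. f_equal. apply ck_eq.
    rewrite Z.mod_small; lia.
  - intros [a|] [b|] [[i Hi]|]; simpl; auto. f_equal. apply ck_eq.
    assert (Hk : (0 < Z.of_nat k)%Z) by lia.
    pose proof (Z.mod_pos_bound (b + Z.of_nat i) _ Hk).
    rewrite Z2Nat.id by lia. rewrite Zplus_mod_idemp_r. do 2 f_equal. lia.
  - reflexivity.
Defined.

(* Sections over D(f) for every f : A, as setoids with point, A-action,
   and restriction maps D(f) -> D(g) whenever D(g) is contained in D(f),
   i.e. whenever g^n = f*h (the restriction is indexed by the witness (n,h)). *)
Record bsheaf := BSheaf {
  sec : A -> Type;
  seq : forall f, sec f -> sec f -> Prop;
  spt : forall f, sec f;
  sact : forall f, A -> sec f -> sec f;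
  sres : forall (f g : A) (n : nat) (h : A), sec f -> sec g }.

(* N~ : sections over D(f) are the localisation N_f = {m / f^a}, with
   m/f^a = m'/f^b iff f^c f^b m = f^c f^a m' for some c. *)
Definition tilde (N : tmodule) : bsheaf :=
  {| sec := fun _ => (N * nat)%type;
     seq := fun f x y =>
       exists c : nat,
         act (apow f (c + snd y)) (fst x) = act (apow f (c + snd x)) (fst y);
     spt := fun _ => (pt, 0);
     sact := fun _ a x => (act a (fst x), snd x);
     sres := fun f g n h x => (act (apow h (snd x)) (fst x), n * snd x) |}.

Definition wedge_seq (S T : bsheaf) (f : A) (x y : sec S f + sec T f) : Prop :=
  match x, y with
  | inl x, inl y => seq S f x y
  | inr x, inr y => seq T f x y
  | inl x, inr y => seq S f x (spt S f) /\ seq T f y (spt T f)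
  | inr x, inl y => seq T f x (spt T f) /\ seq S f y (spt S f)
  end.

Definition wedge (S T : bsheaf) : bsheaf :=
  {| sec := fun f => (sec S f + sec T f)%type;
     seq := wedge_seq S T;
     spt := fun f => inl (spt S f);
     sact := fun f a x => match x with
                          | inl x => inl (sact S f a x)
                          | inr x => inr (sact T f a x) end;
     sres := fun f g n h x => match x with
                          | inl x => inl (sres S f g n h x)
                          | inr x => inr (sres T f g n h x) end |}.

Definition bsheaf_hom (S T : bsheaf) (phi : forall f, sec S f -> sec T f) : Prop :=
  (forall f x y, seq S f x y -> seq T f (phi f x) (phi f y)) /\
  (forall f, seq T f (phi f (spt S f)) (spt T f)) /\
  (forall f a x, seq T f (phi f (sact S f a x)) (sact T f a (phi f x))) /\
  (forall f g n h x, apow g n = amul f h ->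
     seq T g (phi g (sres S f g n h x)) (sres T f g n h (phi f x))).

Definition bsheaf_iso (S T : bsheaf) : Prop :=
  exists (phi : forall f, sec S f -> sec T f) (psi : forall f, sec T f -> sec S f),
    bsheaf_hom S T phi /\ bsheaf_hom T S psi /\
    (forall f x, seq S f (psi f (phi f x)) x) /\
    (forall f y, seq T f (phi f (psi f y)) y).

Definition bsheaf_nonzero (S : bsheaf) : Prop :=
  exists f (x : sec S f), ~ seq S f x (spt S f).

Definition indecomposable_coh (N : tmodule) : Prop :=
  bsheaf_nonzero (tilde N) /\
  ~ (exists N1 N2 : tmodule, fin_gen N1 /\ fin_gen N2 /\
       bsheaf_nonzero (tilde N1) /\ bsheaf_nonzero (tilde N2) /\
       bsheaf_iso (tilde N) (wedge (tilde N1) (tilde N2))).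

(* Every nonzero element m of N generates the submodule {*} u {t^z m}, and since the
   units of <t,t^-1> act by bijections, N is the wedge of this orbit and its
   complement; both are unions of orbits, so this splitting passes to the sheaf.
   Indecomposability therefore forces N to be a single orbit of a point m,
   which is <t,t^-1> when the stabiliser of m is trivial and C_k when it is kZ. *)
From Stdlib Require Import Arith ZArith Lia Wf_nat.
From Stdlib Require Import Classical ClassicalEpsilon ProofIrrelevance.

Lemma act_pt (N : tmodule) (a : A) : act a (@pt N) = pt.
Proof. rewrite <- (act0 N pt), actM. now destruct a. Qed.

Lemma act_Some_eq_pt (N : tmodule) z (m : N) : act (Some z) m = pt -> m = pt.
Proof.
  intro H. rewrite <- (act1 N m).
  replace aone with (amul (Some (- z)%Z) (Some z)) by (unfold aone; simpl; f_equal; lia).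
  now rewrite <- actM, H, act_pt.
Qed.

Lemma act_Some_add (N : tmodule) x y (m : N) :
  act (Some (x + y)%Z) m = act (Some x) (act (Some y) m).
Proof. now rewrite actM. Qed.

Lemma apow_Some w n : apow (Some w) n = Some (Z.of_nat n * w)%Z.
Proof.
  induction n as [|n IH]; [reflexivity|].
  cbn [apow]. rewrite IH. cbn [amul]. f_equal. lia.
Qed.

Lemma apow_add f n m : apow f (n + m) = amul (apow f n) (apow f m).
Proof.
  induction n as [|n IH]; simpl.
  - now destruct (apow f m).
  - rewrite IH. apply amulA.
Qed.

Lemma tilde_refl (N : tmodule) f (x : N * nat) : seq (tilde N) f x x.
Proof. now exists 0. Qed.

Lemma tilde_sym (N : tmodule) f (x y : N * nat) : seq (tilde N) f x y -> seq (tilde N) f y x.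
Proof. intros [c Hc]. now exists c. Qed.

Lemma tilde_None (N : tmodule) (x y : N * nat) : seq (tilde N) None x y.
Proof. exists 1. simpl. now rewrite !act0. Qed.

Lemma tilde_pt (N : tmodule) f (x : N * nat) : fst x = pt -> seq (tilde N) f x (pt, 0).
Proof. destruct x as [m a]; simpl; intros ->. exists 0. simpl. now rewrite !act_pt. Qed.

Lemma tilde_zero_trans (N : tmodule) f (x y : N * nat) :
  seq (tilde N) f x (pt, 0) -> seq (tilde N) f y (pt, 0) -> seq (tilde N) f x y.
Proof.
  destruct x as [m a], y as [m' b]; intros [c Hc] [c' Hc']; simpl in *.
  rewrite act_pt in Hc, Hc'. exists (c + c'); simpl.
  replace (c + c' + b) with ((c' + b) + (c + 0)) by lia.
  replace (c + c' + a) with ((c + a) + (c' + 0)) by lia.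
  now rewrite (apow_add f (c' + b)), (apow_add f (c + a)), <- !actM, Hc, Hc', !act_pt.
Qed.

Lemma tilde_nonzero (M : tmodule) (m : M) : m <> pt -> bsheaf_nonzero (tilde M).
Proof.
  intro H. exists (Some 0%Z), (m, 0). intros [c Hc]. simpl in Hc.
  rewrite !apow_Some, act_pt in Hc. exact (H (act_Some_eq_pt M _ m Hc)).
Qed.

Lemma tilde_nonzero_elt (M : tmodule) : bsheaf_nonzero (tilde M) -> exists m : M, m <> pt.
Proof.
  intros [f [[m a] H]]. exists m. intros E. apply H, tilde_pt. exact E.
Qed.

Lemma bsheaf_iso_of_reflecting (S T : bsheaf)
  (psi : forall f, sec S f -> sec T f) (phi : forall f, sec T f -> sec S f) :
  (forall f x, seq T f x x) ->
  (forall f u v, seq S f u v <-> seq T f (psi f u) (psi f v)) ->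
  (forall f x, psi f (phi f x) = x) ->
  (forall f, psi f (spt S f) = spt T f) ->
  (forall f a u, psi f (sact S f a u) = sact T f a (psi f u)) ->
  (forall f g n h u, psi g (sres S f g n h u) = sres T f g n h (psi f u)) ->
  bsheaf_iso T S.
Proof.
  intros refl refl_psi sect psi_pt psi_act psi_res.
  exists phi, psi. repeat split.
  - intros f x y H. now apply refl_psi; rewrite !sect.
  - intros f. now apply refl_psi; rewrite sect, psi_pt.
  - intros f a x. now apply refl_psi; rewrite psi_act, !sect.
  - intros f g n h x _. now apply refl_psi; rewrite psi_res, !sect.
  - intros f u v. apply refl_psi.
  - intros f. rewrite psi_pt. apply refl.
  - intros f a u. rewrite psi_act. apply refl.
  - intros f g n h u _. rewrite psi_res. apply refl.
  - intros f x. rewrite sect. apply refl.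
  - intros f u. now apply refl_psi; rewrite sect.
Qed.

Lemma tilde_iso_refl (N : tmodule) : bsheaf_iso (tilde N) (tilde N).
Proof.
  apply (bsheaf_iso_of_reflecting _ _ (fun _ x => x) (fun _ x => x));
    try reflexivity. apply tilde_refl.
Qed.

Definition unit_stable (N : tmodule) (Q : N -> Prop) : Prop :=
  forall z m, Q (act (Some z) m) <-> Q m.

Lemma unit_stable_not (N : tmodule) (Q : N -> Prop) :
  unit_stable N Q -> unit_stable N (fun m => ~ Q m).
Proof. intros HQ z m. now rewrite (HQ z m). Qed.

Section StableSubmodule.

Variables (N : tmodule) (Q : N -> Prop).
Hypothesis HQ : unit_stable N Q.

Definition in_sub (m : N) : Prop := m = pt \/ Q m.

Lemma in_sub_act a m : in_sub m -> in_sub (act a m).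
Proof.
  destruct a as [z|]; intros [-> | q].
  - left; apply act_pt.
  - right; now apply HQ.
  - left; apply act0.
  - left; apply act0.
Qed.

Lemma sub_eq (x y : {m | in_sub m}) : proj1_sig x = proj1_sig y -> x = y.
Proof. destruct x, y; simpl; intros ->; f_equal; apply proof_irrelevance. Qed.

Definition sub : tmodule.
Proof.
  refine (@TModule {m | in_sub m} (exist _ pt (or_introl eq_refl))
    (fun a x => exist _ (act a (proj1_sig x)) (in_sub_act a _ (proj2_sig x))) _ _ _);
    intros; apply sub_eq; simpl; auto using act1, actM, act0.
Defined.

Definition sub_val (x : sub * nat) : N * nat := (proj1_sig (fst x), snd x).

Lemma tilde_sub_seq f (x y : sub * nat) :
  seq (tilde sub) f x y <-> seq (tilde N) f (sub_val x) (sub_val y).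
Proof.
  split; intros [c Hc]; exists c; simpl in *.
  - exact (f_equal (@proj1_sig _ _) Hc).
  - now apply sub_eq.
Qed.

Lemma sub_nonzero (m : N) : Q m -> m <> pt -> bsheaf_nonzero (tilde sub).
Proof.
  intros q Hm. apply (tilde_nonzero sub (exist _ m (or_intror q))).
  intro E. exact (Hm (f_equal (@proj1_sig _ _) E)).
Qed.

Definition sub_proj (m : N) : sub :=
  match excluded_middle_informative (in_sub m) with
  | left p => exist _ m p
  | right _ => pt
  end.

Lemma sub_proj_val m : in_sub m -> proj1_sig (sub_proj m) = m.
Proof. unfold sub_proj. destruct excluded_middle_informative; simpl; tauto. Qed.

Lemma fin_gen_sub : fin_gen N -> fin_gen sub.
Proof.
  intros [s Hs]. exists (List.map sub_proj s). intros [m Hm].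
  destruct Hm as [Hpt | q]; [left; now apply sub_eq|].
  destruct (Hs m) as [Hpt | [[z|] [g [Hin ->]]]].
  - left; now apply sub_eq.
  - right. exists (Some z), (sub_proj g). split; [now apply List.in_map|].
    apply sub_eq; simpl. rewrite sub_proj_val; [reflexivity|].
    right; now apply (HQ z).
  - left; apply sub_eq; simpl; apply act0.
Qed.

End StableSubmodule.

Section Splitting.

Variables (N : tmodule) (Q : N -> Prop).
Hypothesis HQ : unit_stable N Q.

Local Notation SQ := (sub N Q HQ).
Local Notation SnQ := (sub N (fun m => ~ Q m) (unit_stable_not N Q HQ)).
Local Notation W := (wedge (tilde SQ) (tilde SnQ)).

(* Over D(t^w) the localisation only applies units, which cannot carry an element
   of Q to one outside Q. *)
Lemma tilde_seq_split w (m m' : N) a b :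
  in_sub N Q m -> in_sub N (fun m => ~ Q m) m' ->
  seq (tilde N) (Some w) (m, a) (m', b) -> m = pt /\ m' = pt.
Proof.
  intros Hm Hm' [c Hc]. simpl in Hc. rewrite !apow_Some in Hc.
  assert (Em : m = pt).
  { destruct Hm as [|q]; [assumption|].
    destruct Hm' as [-> | nq].
    - rewrite act_pt in Hc. exact (act_Some_eq_pt _ _ _ Hc).
    - exfalso. apply nq. apply (HQ (Z.of_nat (c + a) * w)%Z). rewrite <- Hc. now apply HQ. }
  split; [exact Em|]. subst m. rewrite act_pt in Hc.
  symmetry in Hc. exact (act_Some_eq_pt _ _ _ Hc).
Qed.

Definition unsplit f (u : sec W f) : N * nat :=
  match u with inl x => sub_val N Q HQ x | inr x => sub_val N _ _ x end.

Definition split_sec f (x : N * nat) : sec W f :=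
  match excluded_middle_informative (Q (fst x)) with
  | left q => inl (exist _ (fst x) (or_intror q) : SQ, snd x)
  | right nq => inr (exist _ (fst x) (or_intror nq) : SnQ, snd x)
  end.

Lemma unsplit_split f x : unsplit f (split_sec f x) = x.
Proof. unfold split_sec. destruct excluded_middle_informative, x; reflexivity. Qed.

Lemma wedge_seq_unsplit f (u v : sec W f) :
  seq W f u v <-> seq (tilde N) f (unsplit f u) (unsplit f v).
Proof.
  destruct f as [w|].
  2: { split; intros _; [apply tilde_None|].
       destruct u, v; cbn [seq wedge wedge_seq]; repeat split; apply tilde_None. }
  destruct u as [x|x], v as [y|y]; cbn [seq wedge wedge_seq unsplit];
    try apply tilde_sub_seq.
  all: split; [intros [Hx Hy]; apply tilde_zero_trans;
               [apply (proj1 (tilde_sub_seq _ _ _ _ _ _) Hx)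
               |apply (proj1 (tilde_sub_seq _ _ _ _ _ _) Hy)]|].
  all: destruct x as [[m Hm] a], y as [[m' Hm'] b]; intro H;
    cbn [sub_val fst snd proj1_sig] in H.
  - destruct (tilde_seq_split w m m' a b Hm Hm' H) as [-> ->].
    split; apply tilde_sub_seq; now apply tilde_pt.
  - apply tilde_sym in H.
    destruct (tilde_seq_split w m' m b a Hm' Hm H) as [-> ->].
    split; apply tilde_sub_seq; now apply tilde_pt.
Qed.

Lemma tilde_split_iso : bsheaf_iso (tilde N) W.
Proof.
  apply (bsheaf_iso_of_reflecting W (tilde N) unsplit split_sec).
  - apply tilde_refl.
  - apply wedge_seq_unsplit.
  - apply unsplit_split.
  - reflexivity.
  - intros f a [x|x]; reflexivity.
  - intros f g n h [x|x]; reflexivity.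
Qed.

End Splitting.

Lemma mod_iso_sym (M M' : tmodule) : mod_iso M M' -> mod_iso M' M.
Proof. intros [phi [psi [H1 [H2 [H3 H4]]]]]. now exists psi, phi. Qed.

Lemma mod_iso_of_bij (M M' : tmodule) (phi : M -> M') :
  mod_hom M M' phi -> (forall x y, phi x = phi y -> x = y) ->
  (forall y, exists x, phi x = y) -> mod_iso M M'.
Proof.
  intros [Hpt Hact] Hinj Hsur.
  destruct (choice (fun y x => phi x = y) Hsur) as [psi Hpsi].
  exists phi, psi. repeat split; auto.
  - apply Hinj. now rewrite Hpsi, Hpt.
  - intros a m. apply Hinj. now rewrite Hact, !Hpsi.
Qed.

Definition orbit (N : tmodule) (g m : N) : Prop := exists z, m = act (Some z) g.

Lemma orbit_self (N : tmodule) (g : N) : orbit N g g.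
Proof. exists 0%Z. symmetry. apply act1. Qed.

Lemma unit_stable_orbit (N : tmodule) (g : N) : unit_stable N (orbit N g).
Proof.
  intros z m. split.
  - intros [w Hw]. exists (- z + w)%Z.
    now rewrite act_Some_add, <- Hw, <- act_Some_add, Z.add_opp_diag_l, act1.
  - intros [w ->]. exists (z + w)%Z. now rewrite act_Some_add.
Qed.

Section SingleOrbit.

Variables (N : tmodule) (g : N).
Hypothesis g_neq_pt : g <> pt.
Hypothesis orbit_full : forall m, m <> pt -> orbit N g m.

Definition stabilises (z : Z) : Prop := act (Some z) g = g.

Lemma stabilises_sub a b : act (Some a) g = act (Some b) g -> stabilises (a - b).
Proof.
  intro H. unfold stabilises. replace (a - b)%Z with (- b + a)%Z by lia.
  now rewrite act_Some_add, H, <- act_Some_add, Z.add_opp_diag_l, act1.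
Qed.

Lemma stabilises_opp d : stabilises d -> stabilises (- d).
Proof.
  intro H. replace (- d)%Z with (0 - d)%Z by lia. apply stabilises_sub.
  rewrite H. apply act1.
Qed.

Lemma stabilises_mul d q : stabilises d -> stabilises (d * q).
Proof.
  intro H. induction q as [|q IH|q IH] using Z.peano_ind.
  - rewrite Z.mul_0_r. apply act1.
  - unfold stabilises. now rewrite Z.mul_succ_r, Z.add_comm, act_Some_add, IH.
  - unfold stabilises. replace (d * Z.pred q)%Z with (- d + d * q)%Z by lia.
    rewrite act_Some_add, IH. now apply stabilises_opp.
Qed.

Lemma act_Some_mod k z : (0 < k)%Z -> stabilises k ->
  act (Some z) g = act (Some (z mod k)%Z) g.
Proof.
  intros Hk Hper. rewrite (Z.div_mod z k) at 1 by lia.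
  now rewrite Z.add_comm, act_Some_add, (stabilises_mul k).
Qed.

Lemma orbit_map_hom : mod_hom Amod N (fun b => act b g).
Proof. split; [apply act0 | intros a m; simpl; now rewrite actM]. Qed.

Lemma orbit_map_surj (y : N) : exists z, y = pt \/ y = act (Some z) g.
Proof.
  destruct (classic (y = pt)) as [H|H]; [now exists 0%Z; left|].
  destruct (orbit_full y H) as [z Hz]. now exists z; right.
Qed.

Lemma free_orbit_iso : (forall z, stabilises z -> z = 0%Z) -> mod_iso Amod N.
Proof.
  intro Hfree. apply (mod_iso_of_bij _ _ _ orbit_map_hom).
  - intros [x|] [y|] H; simpl in H; rewrite ?act0 in H.
    + apply stabilises_sub, Hfree in H. f_equal. lia.
    + now apply act_Some_eq_pt in H.
    + symmetry in H. now apply act_Some_eq_pt in H.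
    + reflexivity.
  - intro y. destruct (orbit_map_surj y) as [z [-> | ->]].
    + exists None. apply act0.
    + now exists (Some z).
Qed.

Section Periodic.

Variable k : nat.
Hypothesis k_pos : 0 < k.
Hypothesis k_stab : stabilises (Z.of_nat k).
Hypothesis k_least : forall j, 0 < j < k -> ~ stabilises (Z.of_nat j).

Definition cyclic_map (x : Cmod k) : N :=
  match x with None => pt | Some (exist _ i _) => act (Some (Z.of_nat i)) g end.

Lemma cyclic_map_hom : mod_hom (Cmod k) N cyclic_map.
Proof.
  split; [reflexivity|].
  intros [n|] [[i Hi]|]; simpl; rewrite ?act_pt, ?act0; try reflexivity.
  rewrite Z2Nat.id by (apply Z.mod_pos_bound; lia).
  rewrite <- act_Some_mod; [apply act_Some_add | lia | exact k_stab].
Qed.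

Lemma cyclic_map_inj x y : cyclic_map x = cyclic_map y -> x = y.
Proof.
  destruct x as [[i Hi]|], y as [[j Hj]|]; simpl; intro H.
  - f_equal. apply ck_eq. apply stabilises_sub in H.
    destruct (lt_eq_lt_dec i j) as [[Hl|He]|Hl]; [exfalso| assumption |exfalso].
    + apply (k_least (j - i)); [lia|].
      replace (Z.of_nat (j - i)) with (- (Z.of_nat i - Z.of_nat j))%Z by lia.
      now apply stabilises_opp.
    + apply (k_least (i - j)); [lia|]. now rewrite Nat2Z.inj_sub by lia.
  - now apply act_Some_eq_pt in H.
  - symmetry in H. now apply act_Some_eq_pt in H.
  - reflexivity.
Qed.

Lemma periodic_orbit_iso : mod_iso (Cmod k) N.
Proof.
  apply (mod_iso_of_bij _ _ _ cyclic_map_hom cyclic_map_inj).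
  intro y. destruct (orbit_map_surj y) as [z [-> | ->]]; [now exists None|].
  assert (Hlt : Z.to_nat (z mod Z.of_nat k) < k).
  { pose proof (Z.mod_pos_bound z (Z.of_nat k)). lia. }
  exists (Some (exist (fun i => i < k) _ Hlt)). simpl.
  rewrite Z2Nat.id by (apply Z.mod_pos_bound; lia).
  symmetry. apply act_Some_mod; [lia | exact k_stab].
Qed.

End Periodic.

Lemma least_period (z : Z) : z <> 0%Z -> stabilises z ->
  exists k, 0 < k /\ stabilises (Z.of_nat k) /\
    forall j, 0 < j < k -> ~ stabilises (Z.of_nat j).
Proof.
  intros Hz Hstab.
  assert (Habs : stabilises (Z.of_nat (Z.abs_nat z))).
  { rewrite Nat2Z.inj_abs_nat. destruct (Z.abs_spec z) as [[_ ->]|[_ ->]];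
      auto using stabilises_opp. }
  destruct (dec_inh_nat_subset_has_unique_least_element
              (fun j => 0 < j /\ stabilises (Z.of_nat j)))
    as [k [[[Hk Hkstab] Hleast] _]].
  - intro n. apply classic.
  - exists (Z.abs_nat z). split; [lia | exact Habs].
  - exists k. repeat split; auto.
    intros j Hj Hjstab. specialize (Hleast j (conj (proj1 Hj) Hjstab)). lia.
Qed.

Lemma single_orbit_classification :
  mod_iso N Amod \/ exists k : nat, 1 <= k /\ mod_iso N (Cmod k).
Proof.
  destruct (classic (exists z, z <> 0%Z /\ stabilises z)) as [[z [Hz Hstab]]|Hfree].
  - destruct (least_period z Hz Hstab) as [k [Hk [Hkstab Hleast]]].
    right. exists k. split; [lia|]. now apply mod_iso_sym, periodic_orbit_iso.
  - left. apply mod_iso_sym, free_orbit_iso.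
    intros z Hz. apply NNPP. intro Hz0. apply Hfree. now exists z.
Qed.

End SingleOrbit.

Theorem mainTheorem10 :
  forall N : tmodule, fin_gen N -> indecomposable_coh N ->
    exists N' : tmodule,
      bsheaf_iso (tilde N) (tilde N') /\
      (mod_iso N' Amod \/ exists k : nat, 1 <= k /\ mod_iso N' (Cmod k)).
Proof.
  intros N HN [Hnz Hindec].
  destruct (tilde_nonzero_elt N Hnz) as [g Hg].
  destruct (classic (forall m, m <> pt -> orbit N g m)) as [Hfull|Hsplit].
  - exists N. split; [apply tilde_iso_refl | now apply (single_orbit_classification N g)].
  - exfalso. apply Hindec.
    apply not_all_ex_not in Hsplit as [m Hm]. apply imply_to_and in Hm as [Hm Hnotorb].
    pose proof (unit_stable_orbit N g) as Hstab.
    exists (sub N (orbit N g) Hstab),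
           (sub N (fun m => ~ orbit N g m) (unit_stable_not N _ Hstab)).
    repeat split.
    + now apply fin_gen_sub.
    + now apply fin_gen_sub.
    + exact (sub_nonzero N _ Hstab g (orbit_self N g) Hg).
    + exact (sub_nonzero N _ _ m Hnotorb Hm).
    + apply tilde_split_iso.
Qed.
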